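(* Let $K\neq0$ and let $(\mathcal M,\rho)$ be a metric space such that $\operatorname{diam}(\mathcal M)\le\pi/(2\sqrt K)$ when $K>0$. If $(\mathcal M,\rho)$ satisfies the one-sided four point $\operatorname{cosq}_K$ condition, then every pair of points of $\mathcal M$ is joined by at most one shortest.
   Context: A shortest joining $P$ to $Q$ is a rectifiable curve from $P$ to $Q$ of length $\rho(P,Q)$ (curves identified up to reparametrization). Let $\kappa=\sqrt{|K|}$. For $A\neq P$, $B\neq Q$ (with $\rho(A,P),\rho(B,Q),\rho(A,B)<\pi/\sqrt K$ if $K>0$) put $x=\rho(A,P)$, $y=\rho(B,Q)$, $a=\rho(A,B)$, $b=\rho(P,Q)$, $d=\rho(P,B)$, $f=\rho(A,Q)$; for $K>0$ $$\operatorname{cosq}_K(\overrightarrow{AP},\overrightarrow{BQ})=\frac{\cos\kappa b+\cos\kappa x\cos\kappa y}{\sin\kappa x\sin\kappa y}-\frac{(\cos\kappa x+\cos\kappa d)(\cos\kappa y+\cos\kappa f)}{(1+\cos\kappa a)\sin\kappa x\sin\kappa y},$$ and for $K<0$ $$\operatorname{cosq}_K(\overrightarrow{AP},\overrightarrow{BQ})=\frac{(\cosh\kappa x+\cosh\kappa d)(\cosh\kappa y+\cosh\kappa f)}{(1+\cosh\kappa a)\sinh\kappa x\sinh\kappa y}-\frac{\cosh\kappa b+\cosh\kappa x\cosh\kappa y}{\sinh\kappa x\sinh\kappa y}.$$ Upper/lower four point $\operatorname{cosq}_K$ condition: $\operatorname{cosq}_K\le1$ / $\ge-1$ for all such quadruples;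 one-sided: at least one holds. *)

From Stdlib Require Import Reals Lra List.
Open Scope R_scope.

Record is_metric {X : Type} (rho : X -> X -> R) : Prop := {
  metric_eq0 : forall x y, rho x y = 0 <-> x = y;
  metric_sym : forall x y, rho x y = rho y x;
  metric_tri : forall x y z, rho x z <= rho x y + rho y z
}.

(* Curves are maps gamma : R -> X, considered on the parameter interval [0,1]. *)
Definition continuous_curve {X : Type} (rho : X -> X -> R) (gamma : R -> X) : Prop :=
  forall t, 0 <= t <= 1 -> forall eps, 0 < eps ->
    exists delta, 0 < delta /\
      forall s, 0 <= s <= 1 -> Rabs (s - t) < delta -> rho (gamma s) (gamma t) < eps.

Fixpoint ascending (t0 : R) (l : list R) : Prop :=
  match l with
  | nil => True
  | t :: l' => t0 <= t /\ ascending t l'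
  end.

Fixpoint chain_sum {X : Type} (rho : X -> X -> R) (gamma : R -> X) (t0 : R) (l : list R) : R :=
  match l with
  | nil => 0
  | t :: l' => rho (gamma t0) (gamma t) + chain_sum rho gamma t l'
  end.

Definition partition_sums {X : Type} (rho : X -> X -> R) (gamma : R -> X) (s : R) : Prop :=
  exists l : list R, ascending 0 (l ++ 1 :: nil) /\ s = chain_sum rho gamma 0 (l ++ 1 :: nil).

Definition curve_length {X : Type} (rho : X -> X -> R) (gamma : R -> X) (L : R) : Prop :=
  is_lub (partition_sums rho gamma) L.

Definition shortest {X : Type} (rho : X -> X -> R) (P Q : X) (gamma : R -> X) : Prop :=
  continuous_curve rho gamma /\ gamma 0 = P /\ gamma 1 = Q /\ curve_length rho gamma (rho P Q).

Definition reparam (phi : R -> R) : Prop :=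
  (forall t, 0 <= t <= 1 -> 0 <= phi t <= 1) /\
  (forall s t, 0 <= s <= 1 -> 0 <= t <= 1 -> s <= t -> phi s <= phi t) /\
  (forall t, 0 <= t <= 1 -> continuity_pt phi t) /\
  phi 0 = 0 /\ phi 1 = 1.

Definition same_up_to_reparam {X : Type} (g1 g2 : R -> X) : Prop :=
  exists phi1 phi2, reparam phi1 /\ reparam phi2 /\
    forall s, 0 <= s <= 1 -> g1 (phi1 s) = g2 (phi2 s).

Definition cosq (K : R) {X : Type} (rho : X -> X -> R) (A P B Q : X) : R :=
  let k := sqrt (Rabs K) in
  let x := rho A P in let y := rho B Q in let a := rho A B in
  let b := rho P Q in let d := rho P B in let f := rho A Q in
  if Rlt_dec 0 K then
    (cos (k*b) + cos (k*x) * cos (k*y)) / (sin (k*x) * sin (k*y))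
    - (cos (k*x) + cos (k*d)) * (cos (k*y) + cos (k*f))
      / ((1 + cos (k*a)) * sin (k*x) * sin (k*y))
  else
    (cosh (k*x) + cosh (k*d)) * (cosh (k*y) + cosh (k*f))
      / ((1 + cosh (k*a)) * sinh (k*x) * sinh (k*y))
    - (cosh (k*b) + cosh (k*x) * cosh (k*y)) / (sinh (k*x) * sinh (k*y)).

Definition cosq_admissible (K : R) {X : Type} (rho : X -> X -> R) (A P B Q : X) : Prop :=
  A <> P /\ B <> Q /\
  (0 < K -> rho A P < PI / sqrt K /\ rho B Q < PI / sqrt K /\ rho A B < PI / sqrt K).

Definition upper_cosq_condition (K : R) {X : Type} (rho : X -> X -> R) : Prop :=
  forall A P B Q, cosq_admissible K rho A P B Q -> cosq K rho A P B Q <= 1.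

Definition lower_cosq_condition (K : R) {X : Type} (rho : X -> X -> R) : Prop :=
  forall A P B Q, cosq_admissible K rho A P B Q -> -1 <= cosq K rho A P B Q.

Definition one_sided_cosq_condition (K : R) {X : Type} (rho : X -> X -> R) : Prop :=
  upper_cosq_condition K rho \/ lower_cosq_condition K rho.

(** Points [M] of a shortest from [P] to [Q] satisfy ρ(P,M) + ρ(M,Q) = ρ(P,Q). If two such
    points [M1 <> M2] had ρ(P,M1) = ρ(P,M2), then a direct computation with the addition
    formula of the model cosine c_K gives
      cosq(PM1, M2Q) = 1 + ε   and   cosq(M1P, M2Q) = -1 - ε'
    with ε, ε' positive multiples of sgn(K) (1 - c_K ρ(M1,M2)); the diameter bound keeps all
    the angles in [0, π/2], where the needed signs hold. So neither four point condition can
    hold, and a shortest is determined by its distance profile t ↦ ρ(P, γ t), a continuous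
    nondecreasing map of [0,1] onto [0, ρ(P,Q)]. Two such profiles f, g are matched by
    monotone reparametrizations: along each antidiagonal t + t' = v take the largest t with
    f t <= g t'; as v runs through [0,2] this traces a monotone path in {f t = g t'}. *)

From Stdlib Require Import Reals Lra.
Open Scope R_scope.

Lemma cosh_add x y : cosh (x + y) = cosh x * cosh y + sinh x * sinh y.
Proof. unfold cosh, sinh. rewrite Ropp_plus_distr, !exp_plus. field. Qed.

Lemma cosh_pos x : 0 < cosh x.
Proof. unfold cosh. pose proof (exp_pos x). pose proof (exp_pos (- x)). lra. Qed.

Lemma sinh_pos x : 0 < x -> 0 < sinh x.
Proof. intros hx. rewrite <- sinh_0. now apply sinh_lt. Qed.

Lemma cosh_gt_1 x : 0 < x -> 1 < cosh x.
Proof.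
  intros hx. unfold cosh.
  assert (exp x * exp (- x) = 1) by (rewrite <- exp_plus, Rplus_opp_r; apply exp_0).
  assert (1 < exp x) by (rewrite <- exp_0; apply exp_increasing; lra).
  pose proof (exp_pos (- x)). nra.
Qed.

(* Both cases of [cosq] are one formula: for [K < 0] the hyperbolic expression is the
   negative ([sgnK K = -1]) of the spherical one, and [cosK_add] carries the same sign. *)
Definition sgnK (K : R) : R := if Rlt_dec 0 K then 1 else -1.
Definition cosK (K t : R) : R :=
  if Rlt_dec 0 K then cos (sqrt (Rabs K) * t) else cosh (sqrt (Rabs K) * t).
Definition sinK (K t : R) : R :=
  if Rlt_dec 0 K then sin (sqrt (Rabs K) * t) else sinh (sqrt (Rabs K) * t).

Definition cosq_form (e ca cb cd cf cx cy sx sy : R) : R :=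
  e * ((cb + cx * cy) / (sx * sy) - (cx + cd) * (cy + cf) / ((1 + ca) * sx * sy)).

Lemma cosq_eq_form K X (rho : X -> X -> R) A P B Q :
  cosq K rho A P B Q =
  cosq_form (sgnK K) (cosK K (rho A B)) (cosK K (rho P Q)) (cosK K (rho P B))
    (cosK K (rho A Q)) (cosK K (rho A P)) (cosK K (rho B Q))
    (sinK K (rho A P)) (sinK K (rho B Q)).
Proof.
  unfold cosq, cosq_form, sgnK, cosK, sinK; cbv zeta.
  destruct (Rlt_dec 0 K); ring.
Qed.

Lemma cosq_form_gt_1 e cx cy sx sy cd cxy :
  e = 1 \/ e = -1 -> cxy = cx * cy - e * sx * sy ->
  0 < sx -> 0 < sy -> 0 < 1 + cx -> 0 < cy + cxy -> 0 < e * (1 - cd) ->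
  1 < cosq_form e cx cy cd cxy cx cy sx sy.
Proof.
  intros he -> hsx hsy hcx hcy hcd.
  assert (E : cosq_form e cx cy cd (cx * cy - e * sx * sy) cx cy sx sy
              = 1 + e * (1 - cd) * (cy + (cx * cy - e * sx * sy)) / ((1 + cx) * sx * sy)).
  { unfold cosq_form; destruct he as [-> | ->]; field; repeat split; lra. }
  rewrite E.
  assert (0 < e * (1 - cd) * (cy + (cx * cy - e * sx * sy)) / ((1 + cx) * sx * sy)).
  { apply Rdiv_lt_0_compat; [now apply Rmult_lt_0_compat|].
    repeat apply Rmult_lt_0_compat; lra. }
  lra.
Qed.

Lemma cosq_form_lt_m1 e cx cy sx sy cd cxy :
  e = 1 \/ e = -1 -> cxy = cx * cy - e * sx * sy ->
  0 < sx -> 0 < sy -> 0 < cx -> 0 < cy -> 0 < 1 + cd -> 0 < e * (1 - cd) ->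
  cosq_form e cd cxy cx cy cx cy sx sy < -1.
Proof.
  intros he -> hsx hsy hcx hcy hcd hecd.
  assert (E : cosq_form e cd (cx * cy - e * sx * sy) cx cy cx cy sx sy
              = -1 - 2 * cx * cy * (e * (1 - cd)) / ((1 + cd) * sx * sy)).
  { unfold cosq_form; destruct he as [-> | ->]; field; repeat split; lra. }
  rewrite E.
  assert (0 < 2 * cx * cy * (e * (1 - cd)) / ((1 + cd) * sx * sy)).
  { apply Rdiv_lt_0_compat; [apply Rmult_lt_0_compat; [nra|lra]|].
    repeat apply Rmult_lt_0_compat; lra. }
  lra.
Qed.

Lemma sqrt_Rabs_pos K : K <> 0 -> 0 < sqrt (Rabs K).
Proof. intros hK. now apply sqrt_lt_R0, Rabs_pos_lt. Qed.

Lemma sqrt_Rabs_of_pos K : 0 < K -> sqrt (Rabs K) = sqrt K.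
Proof. intros hK. now rewrite Rabs_pos_eq by lra. Qed.

Lemma sgnK_cases K : sgnK K = 1 \/ sgnK K = -1.
Proof. unfold sgnK; destruct (Rlt_dec 0 K); auto. Qed.

Lemma cosK_add K s t :
  cosK K (s + t) = cosK K s * cosK K t - sgnK K * sinK K s * sinK K t.
Proof.
  unfold cosK, sinK, sgnK; rewrite Rmult_plus_distr_l.
  destruct (Rlt_dec 0 K).
  - rewrite cos_plus; ring.
  - rewrite cosh_add; ring.
Qed.

Lemma sinK_pos K t :
  K <> 0 -> 0 < t -> (0 < K -> sqrt K * t <= PI / 2) -> 0 < sinK K t.
Proof.
  intros hK ht hb; pose proof (sqrt_Rabs_pos K hK).
  assert (0 < sqrt (Rabs K) * t) by now apply Rmult_lt_0_compat.
  unfold sinK; destruct (Rlt_dec 0 K) as [Kp|].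
  - rewrite sqrt_Rabs_of_pos in * by exact Kp.
    specialize (hb Kp); pose proof PI_RGT_0. apply sin_gt_0; lra.
  - now apply sinh_pos.
Qed.

Lemma cosK_nonneg K t :
  0 <= t -> (0 < K -> sqrt K * t <= PI / 2) -> 0 <= cosK K t.
Proof.
  intros ht hb; unfold cosK; destruct (Rlt_dec 0 K) as [Kp|].
  - rewrite sqrt_Rabs_of_pos by exact Kp.
    specialize (hb Kp); pose proof PI_RGT_0; pose proof (sqrt_pos K).
    apply cos_ge_0; nra.
  - apply Rlt_le, cosh_pos.
Qed.

Lemma cosK_pos K t :
  0 <= t -> (0 < K -> sqrt K * t < PI / 2) -> 0 < cosK K t.
Proof.
  intros ht hb; unfold cosK; destruct (Rlt_dec 0 K) as [Kp|].
  - rewrite sqrt_Rabs_of_pos by exact Kp.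
    specialize (hb Kp); pose proof PI_RGT_0; pose proof (sqrt_pos K).
    apply cos_gt_0; nra.
  - apply cosh_pos.
Qed.

Lemma sgnK_one_sub_cosK_pos K t :
  K <> 0 -> 0 < t -> (0 < K -> sqrt K * t <= PI / 2) -> 0 < sgnK K * (1 - cosK K t).
Proof.
  intros hK ht hb; pose proof (sqrt_Rabs_pos K hK).
  assert (0 < sqrt (Rabs K) * t) by now apply Rmult_lt_0_compat.
  unfold sgnK, cosK; destruct (Rlt_dec 0 K) as [Kp|].
  - rewrite sqrt_Rabs_of_pos in * by exact Kp.
    specialize (hb Kp); pose proof PI_RGT_0.
    assert (cos (sqrt K * t) < cos 0) by (apply cos_decreasing_1; lra).
    rewrite cos_0 in *; lra.
  - pose proof (cosh_gt_1 (sqrt (Rabs K) * t) ltac:(assumption)); lra.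
Qed.

Lemma metric_nonneg {X : Type} (rho : X -> X -> R) :
  is_metric rho -> forall x y, 0 <= rho x y.
Proof.
  intros Hm x y; pose proof (metric_tri rho Hm x y x).
  rewrite (metric_sym rho Hm y x), (proj2 (metric_eq0 rho Hm x x) eq_refl) in H; lra.
Qed.

Section Betweenness.

Variables (K : R) (X : Type) (rho : X -> X -> R).
Hypotheses (HK : K <> 0) (Hm : is_metric rho)
  (Hdiam : 0 < K -> forall x y : X, rho x y <= PI / (2 * sqrt K)).

Let rho_self x : rho x x = 0.
Proof. now apply (metric_eq0 rho Hm). Qed.

Let rho_pos x y : x <> y -> 0 < rho x y.
Proof.
  intros hxy; destruct (Rle_lt_or_eq_dec _ _ (metric_nonneg rho Hm x y)) as [|e]; auto.
  symmetry in e; now apply (metric_eq0 rho Hm) in e as ->.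
Qed.

Lemma sqrt_mul_dist_le x y : 0 < K -> sqrt K * rho x y <= PI / 2.
Proof.
  intros Kp; pose proof (sqrt_lt_R0 K Kp).
  replace (PI / 2) with (sqrt K * (PI / (2 * sqrt K))) by (field; lra).
  apply Rmult_le_compat_l; [lra | now apply Hdiam].
Qed.

Lemma cosq_admissible_of_neq A P B Q : A <> P -> B <> Q -> cosq_admissible K rho A P B Q.
Proof.
  intros hAP hBQ; split; [exact hAP | split; [exact hBQ | intros Kp]].
  assert (lt : forall x y, rho x y < PI / sqrt K).
  { intros x y; pose proof (sqrt_lt_R0 K Kp); pose proof PI_RGT_0.
    pose proof (sqrt_mul_dist_le x y Kp).
    apply (Rmult_lt_reg_l (sqrt K)); [lra|].
    replace (sqrt K * (PI / sqrt K)) with PI by (field; lra); lra. }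
  auto.
Qed.

Section Config.

Variables P M1 M2 Q : X.
Hypotheses (H1 : rho P M1 + rho M1 Q = rho P Q) (H2 : rho P M2 + rho M2 Q = rho P Q)
  (H12 : rho P M1 = rho P M2) (hPM : P <> M1) (hMQ : M1 <> Q) (hMM : M1 <> M2).

Let s := rho P M1.
Let y := rho M1 Q.

Let s_pos : 0 < s. Proof. now apply rho_pos. Qed.
Let y_pos : 0 < y. Proof. now apply rho_pos. Qed.
Let rho_M2Q : rho M2 Q = y. Proof. unfold y; lra. Qed.
Let rho_PQ : rho P Q = s + y. Proof. unfold s, y; lra. Qed.

Let bound_sum : 0 < K -> sqrt K * (s + y) <= PI / 2.
Proof. rewrite <- rho_PQ; apply sqrt_mul_dist_le. Qed.
Let bound_s : 0 < K -> sqrt K * s < PI / 2.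
Proof. intros Kp; pose proof (sqrt_lt_R0 K Kp); pose proof (bound_sum Kp); nra. Qed.
Let bound_y : 0 < K -> sqrt K * y < PI / 2.
Proof. intros Kp; pose proof (sqrt_lt_R0 K Kp); pose proof (bound_sum Kp); nra. Qed.

Lemma cosq_between_gt_1 : 1 < cosq K rho P M1 M2 Q.
Proof.
  rewrite cosq_eq_form, <- H12, rho_M2Q, rho_PQ; fold s y.
  apply cosq_form_gt_1; [apply sgnK_cases | apply cosK_add | | | | | ].
  - apply sinK_pos; auto; intros Kp; apply Rlt_le; auto.
  - apply sinK_pos; auto; intros Kp; apply Rlt_le; auto.
  - pose proof (cosK_pos K s ltac:(lra) bound_s); lra.
  - pose proof (cosK_pos K y ltac:(lra) bound_y).
    pose proof (cosK_nonneg K (s + y) ltac:(lra) bound_sum); lra.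
  - apply sgnK_one_sub_cosK_pos; [exact HK | now apply rho_pos | apply sqrt_mul_dist_le].
Qed.

Lemma cosq_between_lt_m1 : cosq K rho M1 P M2 Q < -1.
Proof.
  rewrite cosq_eq_form, <- H12, rho_M2Q, rho_PQ, (metric_sym rho Hm M1 P); fold s y.
  apply cosq_form_lt_m1; [apply sgnK_cases | apply cosK_add | | | | | | ].
  - apply sinK_pos; auto; intros Kp; apply Rlt_le; auto.
  - apply sinK_pos; auto; intros Kp; apply Rlt_le; auto.
  - apply cosK_pos; auto; lra.
  - apply cosK_pos; auto; lra.
  - pose proof (cosK_nonneg K (rho M1 M2) (metric_nonneg rho Hm _ _)
                  (sqrt_mul_dist_le M1 M2)); lra.
  - apply sgnK_one_sub_cosK_pos; [exact HK | now apply rho_pos | apply sqrt_mul_dist_le].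
Qed.

End Config.

Lemma between_eq_of_dist_eq (Hcosq : one_sided_cosq_condition K rho) P Q M1 M2 :
  rho P M1 + rho M1 Q = rho P Q -> rho P M2 + rho M2 Q = rho P Q ->
  rho P M1 = rho P M2 -> M1 = M2.
Proof.
  intros H1 H2 H12.
  assert (eq_dec : forall x y : X, x = y \/ x <> y).
  { intros x y; destruct (Req_dec (rho x y) 0) as [e|ne]; [left | right].
    - now apply (metric_eq0 rho Hm).
    - intros ->; auto. }
  destruct (eq_dec M1 M2) as [|hMM]; [assumption | exfalso].
  destruct (eq_dec P M1) as [<-|hPM].
  { apply hMM, (metric_eq0 rho Hm); rewrite rho_self in H12; auto. }
  destruct (eq_dec M1 Q) as [->|hMQ].
  { apply hMM, (metric_eq0 rho Hm); rewrite (metric_sym rho Hm); lra. }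
  assert (hM2Q : M2 <> Q) by (intros ->; apply hMQ, (metric_eq0 rho Hm); lra).
  destruct Hcosq as [Hup | Hlow].
  - pose proof (Hup _ _ _ _ (cosq_admissible_of_neq P M1 M2 Q hPM hM2Q)).
    pose proof (cosq_between_gt_1 P M1 M2 Q H1 H2 H12 hPM hMQ hMM); lra.
  - pose proof (Hlow _ _ _ _ (cosq_admissible_of_neq M1 P M2 Q (not_eq_sym hPM) hM2Q)).
    pose proof (cosq_between_lt_m1 P M1 M2 Q H1 H2 H12 hPM hMQ hMM); lra.
Qed.

End Betweenness.

Definition cont_on (a b : R) (h : R -> R) : Prop :=
  forall t, a <= t <= b -> forall eps, 0 < eps -> exists delta, 0 < delta /\
    forall s, a <= s <= b -> Rabs (s - t) < delta -> Rabs (h s - h t) < eps.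

Definition nondecr_on (a b : R) (h : R -> R) : Prop :=
  forall s t, a <= s <= b -> a <= t <= b -> s <= t -> h s <= h t.

Lemma cont_on_sub a b f g :
  cont_on a b f -> cont_on a b g -> cont_on a b (fun t => f t - g t).
Proof.
  intros cf cg t ht eps heps.
  destruct (cf t ht (eps / 2) ltac:(lra)) as [d1 [d1p Hd1]].
  destruct (cg t ht (eps / 2) ltac:(lra)) as [d2 [d2p Hd2]].
  exists (Rmin d1 d2); split; [now apply Rmin_glb_lt|].
  intros s hs hst.
  specialize (Hd1 s hs (Rlt_le_trans _ _ _ hst (Rmin_l _ _))).
  specialize (Hd2 s hs (Rlt_le_trans _ _ _ hst (Rmin_r _ _))).
  apply Rabs_def2 in Hd1, Hd2; apply Rabs_def1; lra.
Qed.

Lemma cont_on_reflect a b v g : cont_on a b g -> cont_on (v - b) (v - a) (fun t => g (v - t)).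
Proof.
  intros cg t ht eps heps.
  destruct (cg (v - t) ltac:(lra) eps heps) as [d [dp Hd]].
  exists d; split; [exact dp|]; intros s hs hst.
  apply Hd; [lra|]. now replace (v - s - (v - t)) with (- (s - t)) by ring; rewrite Rabs_Ropp.
Qed.

Lemma cont_on_subinterval a b a' b' h :
  a <= a' -> b' <= b -> cont_on a b h -> cont_on a' b' h.
Proof.
  intros ha hb ch t ht eps heps.
  destruct (ch t ltac:(lra) eps heps) as [d [dp Hd]].
  exists d; split; [exact dp|]; intros s hs; apply Hd; lra.
Qed.

Lemma is_lub_sublevel_root (h : R -> R) a b (E : R -> Prop) m :
  a <= b -> cont_on a b h -> h a <= 0 -> 0 <= h b ->
  (forall t, E t <-> a <= t <= b /\ h t <= 0) ->
  is_lub E m -> a <= m <= b /\ h m = 0.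
Proof.
  intros hab hc ha hb HE [Hub Hlub].
  assert (am : a <= m) by (apply Hub, HE; lra).
  assert (mb : m <= b) by (apply Hlub; intros t Et; apply HE in Et; lra).
  split; [lra|]; apply Rle_antisym.
  - destruct (Rle_or_lt (h m) 0) as [|hpos]; [assumption|exfalso].
    destruct (hc m (conj am mb) (h m) hpos) as [d [dpos Hd]].
    enough (m <= m - d) by lra.
    apply Hlub; intros t Et; pose proof (Hub t Et).
    apply HE in Et as [ht hnp].
    destruct (Rle_or_lt t (m - d)) as [|hlt]; [assumption|exfalso].
    specialize (Hd t ht ltac:(rewrite Rabs_left1; lra)); apply Rabs_def2 in Hd; lra.
  - destruct (Rle_or_lt 0 (h m)) as [|hneg]; [assumption|exfalso].
    destruct (Rle_lt_or_eq_dec m b mb) as [mb'|emb]; [|subst m; lra].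
    destruct (hc m (conj am mb) (- h m) ltac:(lra)) as [d [dpos Hd]].
    set (t := Rmin b (m + d / 2)).
    assert (m < t) by (apply Rmin_glb_lt; lra).
    assert (t <= b) by apply Rmin_l.
    assert (t <= m + d / 2) by apply Rmin_r.
    specialize (Hd t ltac:(lra) ltac:(rewrite Rabs_right; lra)); apply Rabs_def2 in Hd.
    pose proof (Hub t (proj2 (HE t) ltac:(lra))); lra.
Qed.

Lemma lipschitz_continuity_pt (F : R -> R) c :
  0 < c -> (forall u u', Rabs (F u - F u') <= c * Rabs (u - u')) ->
  forall x, continuity_pt F x.
Proof.
  intros hc HF x eps heps; exists (eps / c); split; [now apply Rdiv_lt_0_compat|].
  intros x0 [_ Hx]; simpl in *; unfold R_dist in *.
  eapply Rle_lt_trans; [apply HF|].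
  replace eps with (c * (eps / c)) by (field; lra).
  now apply Rmult_lt_compat_l.
Qed.

Definition clamp01 (u : R) : R := Rmax 0 (Rmin u 1).

Lemma clamp01_range u : 0 <= clamp01 u <= 1.
Proof. unfold clamp01, Rmax, Rmin; repeat destruct Rle_dec; lra. Qed.

Lemma clamp01_id u : 0 <= u <= 1 -> clamp01 u = u.
Proof. unfold clamp01, Rmax, Rmin; repeat destruct Rle_dec; lra. Qed.

Lemma clamp01_lipschitz u u' : Rabs (clamp01 u - clamp01 u') <= Rabs (u - u').
Proof. unfold clamp01, Rmax, Rmin; repeat destruct Rle_dec; split_Rabs; lra. Qed.

(* For [0 <= v <= 2], both [t] and [v - t] lie in [[0,1]] iff [diag_lo v <= t <= diag_hi v]. *)
Definition diag_lo (v : R) : R := Rmax 0 (v - 1).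
Definition diag_hi (v : R) : R := Rmin v 1.

Lemma diag_bounds v : 0 <= v <= 2 ->
  0 <= diag_lo v /\ v - 1 <= diag_lo v /\ diag_lo v <= diag_hi v /\
  diag_hi v <= 1 /\ diag_hi v <= v /\
  (diag_lo v = 0 \/ diag_lo v = v - 1) /\ (diag_hi v = v \/ diag_hi v = 1).
Proof. intros; unfold diag_lo, diag_hi, Rmax, Rmin; repeat destruct Rle_dec; lra. Qed.

Section Matching.

Variables (f g : R -> R) (L : R).
Hypotheses (f_cont : cont_on 0 1 f) (g_cont : cont_on 0 1 g)
  (f_mono : nondecr_on 0 1 f) (g_mono : nondecr_on 0 1 g)
  (f0 : f 0 = 0) (g0 : g 0 = 0) (f1 : f 1 = L) (g1 : g 1 = L).

(* The disjunct [t = diag_lo v] only makes the set nonempty for every [v]; when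
   [0 <= v <= 2] it is subsumed by the other one (see [meet_set_iff]). *)
Definition meet_set (v t : R) : Prop :=
  t = diag_lo v \/ (diag_lo v <= t <= diag_hi v /\ f t <= g (v - t)).

Lemma meet_set_has_lub v : {m | is_lub (meet_set v) m}.
Proof.
  apply completeness.
  - exists (Rmax (diag_lo v) (diag_hi v)); intros t [->|[ht _]].
    + apply Rmax_l.
    + eapply Rle_trans; [apply ht | apply Rmax_r].
  - exists (diag_lo v); now left.
Qed.

Definition meet (v : R) : R := proj1_sig (meet_set_has_lub v).

Lemma meet_is_lub v : is_lub (meet_set v) (meet v).
Proof. exact (proj2_sig (meet_set_has_lub v)). Qed.

Lemma f_le_g_at_diag_lo v : 0 <= v <= 2 -> f (diag_lo v) <= g (v - diag_lo v).
Proof.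
  intros hv; destruct (diag_bounds v hv) as (l0 & l1 & lh & h1 & hv' & [e|e] & _); rewrite e.
  - rewrite f0; rewrite <- g0; apply g_mono; lra.
  - replace (v - (v - 1)) with 1 by ring; rewrite g1, <- f1; apply f_mono; lra.
Qed.

Lemma g_le_f_at_diag_hi v : 0 <= v <= 2 -> g (v - diag_hi v) <= f (diag_hi v).
Proof.
  intros hv; destruct (diag_bounds v hv) as (l0 & l1 & lh & h1 & hv' & _ & [e|e]); rewrite e.
  - replace (v - v) with 0 by ring; rewrite g0, <- f0; apply f_mono; lra.
  - rewrite f1, <- g1; apply g_mono; lra.
Qed.

Lemma meet_set_iff v t : 0 <= v <= 2 ->
  meet_set v t <-> diag_lo v <= t <= diag_hi v /\ f t - g (v - t) <= 0.
Proof.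
  intros hv; pose proof (diag_bounds v hv); pose proof (f_le_g_at_diag_lo v hv).
  split; [intros [->|[ht hfg]]|intros [ht hfg]]; [split; lra | split; lra |].
  right; split; [exact ht | lra].
Qed.

Lemma meet_spec v : 0 <= v <= 2 ->
  diag_lo v <= meet v <= diag_hi v /\ f (meet v) = g (v - meet v).
Proof.
  intros hv; destruct (diag_bounds v hv) as (l0 & l1 & lh & h1 & hv' & _).
  destruct (is_lub_sublevel_root (fun t => f t - g (v - t)) (diag_lo v) (diag_hi v)
              (meet_set v) (meet v)) as [hm e].
  - exact lh.
  - apply cont_on_sub.
    + apply (cont_on_subinterval 0 1); [lra | lra | exact f_cont].
    + apply (cont_on_subinterval (v - 1) (v - 0)); [lra | lra |].
      now apply cont_on_reflect.
  - pose proof (f_le_g_at_diag_lo v hv); lra.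
  - pose proof (g_le_f_at_diag_hi v hv); lra.
  - intros t; now apply meet_set_iff.
  - apply meet_is_lub.
  - split; [exact hm | lra].
Qed.

Lemma meet_le v v' : 0 <= v <= 2 -> 0 <= v' <= 2 -> v <= v' -> meet v <= meet v'.
Proof.
  intros hv hv' hvv.
  destruct (diag_bounds v hv) as (l0 & l1 & lh & h1 & hle & _).
  destruct (diag_bounds v' hv') as (l0' & l1' & lh' & h1' & hle' & _ & hh').
  destruct (meet_spec v hv) as [hm e].
  destruct (Rlt_or_le (meet v) (diag_lo v')) as [|hlo].
  { pose proof (meet_spec v' hv'); lra. }
  apply (meet_is_lub v'), (meet_set_iff v' _ hv').
  split; [split; [exact hlo | destruct hh'; lra]|].
  rewrite e; enough (g (v - meet v) <= g (v' - meet v)) by lra.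
  apply g_mono; lra.
Qed.

Lemma meet_increment_le v v' : 0 <= v <= 2 -> 0 <= v' <= 2 -> v <= v' ->
  meet v' - meet v <= v' - v.
Proof.
  intros hv hv' hvv.
  destruct (diag_bounds v hv) as (l0 & l1 & lh & h1 & hle & _ & hh).
  destruct (diag_bounds v' hv') as (l0' & l1' & lh' & h1' & hle' & _).
  destruct (meet_spec v' hv') as [hm' e'].
  set (t := meet v' - (v' - v)).
  destruct (Rle_or_lt t (diag_lo v)) as [|hlo].
  { pose proof (meet_spec v hv); unfold t in *; lra. }
  enough (t <= meet v) by (unfold t in *; lra).
  apply (meet_is_lub v), (meet_set_iff v _ hv).
  split; [split; unfold t in *; [lra | destruct hh; lra]|].
  replace (v - t) with (v' - meet v') by (unfold t; ring); rewrite <- e'.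
  enough (f t <= f (meet v')) by lra.
  apply f_mono; unfold t in *; lra.
Qed.

Lemma meet_0 : meet 0 = 0.
Proof.
  destruct (meet_spec 0 ltac:(lra)) as [h _].
  unfold diag_lo, diag_hi, Rmax, Rmin in h; repeat destruct Rle_dec in h; lra.
Qed.

Lemma meet_2 : meet 2 = 1.
Proof.
  destruct (meet_spec 2 ltac:(lra)) as [h _].
  unfold diag_lo, diag_hi, Rmax, Rmin in h; repeat destruct Rle_dec in h; lra.
Qed.

Lemma meet_dist_le v v' : 0 <= v <= 2 -> 0 <= v' <= 2 ->
  Rabs (meet v - meet v') <= Rabs (v - v') /\
  Rabs ((v - meet v) - (v' - meet v')) <= Rabs (v - v').
Proof.
  intros hv hv'; destruct (Rle_or_lt v v') as [hle|hlt].
  - pose proof (meet_le v v' hv hv' hle); pose proof (meet_increment_le v v' hv hv' hle).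
    split; split_Rabs; lra.
  - pose proof (meet_le v' v hv' hv ltac:(lra)).
    pose proof (meet_increment_le v' v hv' hv ltac:(lra)).
    split; split_Rabs; lra.
Qed.

(* Clamping makes the parameters Lipschitz on all of [R], which [continuity_pt] at the
   endpoints 0 and 1 requires. *)
Definition match_param1 (u : R) : R := meet (2 * clamp01 u).
Definition match_param2 (u : R) : R := 2 * clamp01 u - meet (2 * clamp01 u).

Lemma match_params_lipschitz u u' :
  Rabs (match_param1 u - match_param1 u') <= 2 * Rabs (u - u') /\
  Rabs (match_param2 u - match_param2 u') <= 2 * Rabs (u - u').
Proof.
  pose proof (clamp01_range u); pose proof (clamp01_range u').
  pose proof (clamp01_lipschitz u u').
  destruct (meet_dist_le (2 * clamp01 u) (2 * clamp01 u') ltac:(lra) ltac:(lra)) as [d1 d2].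
  replace (2 * clamp01 u - 2 * clamp01 u') with (2 * (clamp01 u - clamp01 u')) in d1, d2
    by ring.
  rewrite Rabs_mult, (Rabs_right 2) in d1, d2 by lra.
  unfold match_param1, match_param2; split; lra.
Qed.

Lemma reparam_match_param1 : reparam match_param1.
Proof.
  unfold match_param1; split; [|split; [|split; [|split]]].
  - intros t ht; rewrite clamp01_id by lra; pose proof (diag_bounds (2 * t) ltac:(lra)).
    pose proof (meet_spec (2 * t) ltac:(lra)); lra.
  - intros s t hs ht hst; rewrite !clamp01_id by lra; apply meet_le; lra.
  - intros t _; apply (lipschitz_continuity_pt _ 2); [lra|].
    intros; apply match_params_lipschitz.
  - rewrite clamp01_id, Rmult_0_r by lra; exact meet_0.
  - rewrite clamp01_id, Rmult_1_r by lra; exact meet_2.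
Qed.

Lemma reparam_match_param2 : reparam match_param2.
Proof.
  unfold match_param2; split; [|split; [|split; [|split]]].
  - intros t ht; rewrite clamp01_id by lra; pose proof (diag_bounds (2 * t) ltac:(lra)).
    pose proof (meet_spec (2 * t) ltac:(lra)); lra.
  - intros s t hs ht hst; rewrite !clamp01_id by lra.
    pose proof (meet_increment_le (2 * s) (2 * t)); lra.
  - intros t _; apply (lipschitz_continuity_pt _ 2); [lra|].
    intros; apply match_params_lipschitz.
  - rewrite clamp01_id, Rmult_0_r, meet_0 by lra; ring.
  - rewrite clamp01_id, Rmult_1_r, meet_2 by lra; ring.
Qed.

Lemma match_params_agree u : 0 <= u <= 1 -> f (match_param1 u) = g (match_param2 u).
Proof.
  intros hu; unfold match_param1, match_param2; rewrite clamp01_id by lra.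
  apply meet_spec; lra.
Qed.

End Matching.

Lemma exists_matching_reparams (f g : R -> R) (L : R) :
  cont_on 0 1 f -> cont_on 0 1 g -> nondecr_on 0 1 f -> nondecr_on 0 1 g ->
  f 0 = 0 -> g 0 = 0 -> f 1 = L -> g 1 = L ->
  exists phi1 phi2, reparam phi1 /\ reparam phi2 /\
    forall u, 0 <= u <= 1 -> f (phi1 u) = g (phi2 u).
Proof.
  intros; exists (match_param1 f g), (match_param2 f g); split; [|split].
  - eapply reparam_match_param1; eauto.
  - eapply reparam_match_param2; eauto.
  - eapply match_params_agree; eauto.
Qed.

Section Shortest.

Variables (X : Type) (rho : X -> X -> R) (P Q : X) (g : R -> X).
Hypotheses (Hm : is_metric rho) (Hg : shortest rho P Q g).

Lemma shortest_chain_le l :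
  ascending 0 (l ++ 1 :: nil) -> chain_sum rho g 0 (l ++ 1 :: nil) <= rho P Q.
Proof. intros hl; apply (proj1 (proj2 (proj2 (proj2 Hg)))); now exists l. Qed.

Lemma shortest_dist_0 : rho P (g 0) = 0.
Proof. destruct Hg as (_ & -> & _); now apply (metric_eq0 rho Hm). Qed.

Lemma shortest_dist_1 : rho P (g 1) = rho P Q.
Proof. now destruct Hg as (_ & _ & -> & _). Qed.

Lemma shortest_between t : 0 <= t <= 1 -> rho P (g t) + rho (g t) Q = rho P Q.
Proof.
  intros ht; destruct Hg as (_ & g0 & g1 & _).
  pose proof (shortest_chain_le (t :: nil) ltac:(simpl; lra)) as hc.
  simpl in hc; rewrite g0, g1 in hc.
  pose proof (metric_tri rho Hm P (g t) Q); lra.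
Qed.

Lemma shortest_dist_nondecr : nondecr_on 0 1 (fun t => rho P (g t)).
Proof.
  intros s t hs ht hst; destruct Hg as (_ & g0 & g1 & _).
  pose proof (shortest_chain_le (s :: t :: nil) ltac:(simpl; lra)) as hc.
  simpl in hc; rewrite g0, g1 in hc.
  pose proof (shortest_between t ht); pose proof (metric_nonneg rho Hm (g s) (g t)).
  simpl; lra.
Qed.

Lemma shortest_dist_cont : cont_on 0 1 (fun t => rho P (g t)).
Proof.
  intros t ht eps heps; destruct (proj1 Hg t ht eps heps) as [d [dp Hd]].
  exists d; split; [exact dp|]; intros s hs hst; specialize (Hd s hs hst).
  pose proof (metric_tri rho Hm P (g t) (g s)); pose proof (metric_tri rho Hm P (g s) (g t)).
  rewrite (metric_sym rho Hm (g t) (g s)) in *; apply Rabs_def1; lra.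
Qed.

End Shortest.

Theorem mainTheorem11 (K : R) (X : Type) (rho : X -> X -> R) :
  K <> 0 ->
  is_metric rho ->
  (0 < K -> forall x y : X, rho x y <= PI / (2 * sqrt K)) ->
  one_sided_cosq_condition K rho ->
  forall (P Q : X) (g1 g2 : R -> X),
    shortest rho P Q g1 -> shortest rho P Q g2 -> same_up_to_reparam g1 g2.
Proof.
  intros HK Hm Hdiam Hcosq P Q g1 g2 Hg1 Hg2.
  destruct (exists_matching_reparams (fun t => rho P (g1 t)) (fun t => rho P (g2 t)) (rho P Q)
    (shortest_dist_cont X rho P Q g1 Hm Hg1) (shortest_dist_cont X rho P Q g2 Hm Hg2)
    (shortest_dist_nondecr X rho P Q g1 Hm Hg1) (shortest_dist_nondecr X rho P Q g2 Hm Hg2)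
    (shortest_dist_0 X rho P Q g1 Hm Hg1) (shortest_dist_0 X rho P Q g2 Hm Hg2)
    (shortest_dist_1 X rho P Q g1 Hg1) (shortest_dist_1 X rho P Q g2 Hg2))
    as (phi1 & phi2 & r1 & r2 & agree).
  exists phi1, phi2; split; [exact r1 | split; [exact r2 |]]; intros u hu.
  apply (between_eq_of_dist_eq K X rho HK Hm Hdiam Hcosq P Q); auto.
  - apply shortest_between; [exact Hm | exact Hg1 | apply (proj1 r1 u hu)].
  - apply shortest_between; [exact Hm | exact Hg2 | apply (proj1 r2 u hu)].
Qed.
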